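(* Let $n\ge3$ and let $L^B$ be a blow-up of $L\cong\mathbf{2}^n$. Let $x,y$ be vertices of $G(L^B)$ with $[x]\neq[y]$. If $x$ and $y$ are comparable, or if $x\wedge y=0$, then $x$ and $y$ are not mutually maximally distant in $G(L^B)$.
   Context: Blow-up: for the Boolean lattice $L\cong\mathbf{2}^n$ with atoms $q_1,\dots,q_n$, replace each $a\in L\setminus\{0,1\}$ by a finite chain $C_a$: $a=a^1\lessdot\cdots\lessdot a^{k_a}$ ($k_a\ge 1$), keep $0,1$; elements of one chain are ordered along it, and for $u\in C_a,v\in C_b$ with $a\ne b$ ($C_0=\{0\},C_1=\{1\}$), $u\le v$ iff $a<b$ in $L$. $G(L^B)$ is the zero-divisor graph: vertices are nonzero $a\in L^B$ having some nonzero $b$ with $a\wedge b=0$, distinct vertices adjacent iff their meet is $0$. $[x]$ denotes the class of $x$ under $x\sim y\iff x^\perp=y^\perp$, where $x^\perp=\{z: x\wedge z=0\}$. In a graph, $u$ is maximally distant from $v$ if $d(v,w)\le d(u,v)$ for every neighbour $w$ of $u$; $u,v$ are mutually maximally distant if each is maximally distant from the other. *)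

From mathcomp Require Import all_boot.
Set Implicit Arguments. Unset Strict Implicit. Unset Printing Implicit Defensive.

(* An element of the blow-up L^B is encoded as a pair (a, i): the i-th element
   a^(i+1) of the chain C_a (0-based index).  The chain length function is
   k : {set 'I_n} -> nat; for a = 0 (set0) or a = 1 (setT) the chain is a
   single element, index 0. *)
Definition BU (n : nat) := ({set 'I_n} * nat)%type.

Definition bu_trivial n (a : {set 'I_n}) : bool := (a == set0) || (a == [set: 'I_n]).

Definition bu_valid n (k : {set 'I_n} -> nat) (u : BU n) : bool :=
  if bu_trivial u.1 then u.2 == 0 else u.2 < k u.1.

Definition bu_zero n : BU n := (set0, 0).

Definition bu_le n (u v : BU n) : bool :=
  ((u.1 == v.1) && (u.2 <= v.2)) || (u.1 \proper v.1).

Definition bu_top n (k : {set 'I_n} -> nat) (c : {set 'I_n}) : nat :=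
  if bu_trivial c then 0 else (k c).-1.

Definition bu_meet n (k : {set 'I_n} -> nat) (u v : BU n) : BU n :=
  if u.1 == v.1 then (u.1, minn u.2 v.2)
  else if u.1 \subset v.1 then u
  else if v.1 \subset u.1 then v
  else (u.1 :&: v.1, bu_top k (u.1 :&: v.1)).

Definition is_vertex n k (x : BU n) : Prop :=
  bu_valid k x /\ x <> bu_zero n /\
  exists y, bu_valid k y /\ y <> bu_zero n /\ bu_meet k x y = bu_zero n.

Definition adj n k (x y : BU n) : Prop :=
  is_vertex k x /\ is_vertex k y /\ x <> y /\ bu_meet k x y = bu_zero n.

Fixpoint within n k (m : nat) (u v : BU n) : Prop :=
  match m with
  | 0 => u = v
  | m'.+1 => u = v \/ exists w, adj k u w /\ within k m' w v
  end.

(* u is maximally distant from v: d(v,w) <= d(u,v) for every neighbour w of u *)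
Definition max_distant n k (u v : BU n) : Prop :=
  forall w, adj k u w -> forall m, within k m u v -> within k m w v.

Definition mutually_max_distant n k (u v : BU n) : Prop :=
  max_distant k u v /\ max_distant k v u.

(* x ~ y  iff  x^perp = y^perp (in L^B) *)
Definition perp_equiv n k (x y : BU n) : Prop :=
  forall z, bu_valid k z -> (bu_meet k x z = bu_zero n <-> bu_meet k y z = bu_zero n).

From mathcomp Require Import all_boot.
From mathcomp Require Import zify.

Set Implicit Arguments.
Unset Strict Implicit.
Unset Printing Implicit Defensive.

(* Two elements of L^B meet in 0 exactly when their underlying elements of 2^n
   are disjoint, so the vertices of G(L^B) are the elements lying over a proper
   nontrivial a, adjacency is disjointness downstairs, and elements over the
   same a are perp-equivalent: [x] <> [y] forces the underlying sets a, b to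
   differ.  If a is strictly below b, then d(x, y) = 2 through a point over ~b,
   while the neighbour of x over ~a is at distance 3 from y, since a common
   neighbour of both would lie below a, hence below b.  If a and b are
   disjoint, x and y are adjacent, and it suffices to find a neighbour of x
   other than y not adjacent to y: a point over an atom of b when #|b| >= 2, or
   over ~a when b <> ~a; as n >= 3, this exists for x or for y. *)

Section BlowUp.
Variables (n : nat) (k : {set 'I_n} -> nat).
Hypothesis k_gt0 : forall a : {set 'I_n}, a != set0 -> a != [set: 'I_n] -> 0 < k a.

Lemma bu_meet_fst (u v : BU n) : (bu_meet k u v).1 = u.1 :&: v.1.
Proof.
rewrite /bu_meet; case: eqP => [->|_]; first by rewrite setIid.
case: ifP => [/setIidPl -> //|_].
by case: ifP => [/setIidPr -> //|_].
Qed.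

Lemma bu_valid0 (c : {set 'I_n}) : bu_valid k (c, 0).
Proof. by rewrite /bu_valid; case: ifP => // /norP []; apply: k_gt0. Qed.

Lemma bu_valid_top (c : {set 'I_n}) : bu_valid k (c, bu_top k c).
Proof.
rewrite /bu_valid /bu_top /=; case: (boolP (bu_trivial c)) => // /norP [c0 cT].
by have := @k_gt0 c c0 cT; lia.
Qed.

Lemma bu_valid_meet {u v : BU n} :
  bu_valid k u -> bu_valid k v -> bu_valid k (bu_meet k u v).
Proof.
case: u => a i; case: v => b j; rewrite /bu_meet /= => va vb.
case: eqP => [_|_]; last by do 2?case: ifP => // _; apply: bu_valid_top.
by move: va; rewrite /bu_valid /=; case: ifP => _ /=; lia.
Qed.

Lemma bu_valid_set0 (u : BU n) : bu_valid k u -> u.1 = set0 -> u = bu_zero n.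
Proof.
case: u => c i /= vc ec; move: vc; rewrite /bu_valid /bu_trivial ec eqxx.
by move=> /eqP /= ->.
Qed.

Lemma bu_meet_eq0 {u v : BU n} : bu_valid k u -> bu_valid k v ->
  bu_meet k u v = bu_zero n <-> u.1 :&: v.1 = set0.
Proof.
move=> vu vv; rewrite -bu_meet_fst; split=> [-> //|].
exact/bu_valid_set0/bu_valid_meet.
Qed.

Lemma perp_equiv_fst (x y : BU n) :
  bu_valid k x -> bu_valid k y -> x.1 = y.1 -> perp_equiv k x y.
Proof.
move=> vx vy exy z vz.
by rewrite (bu_meet_eq0 vx vz) (bu_meet_eq0 vy vz) exy.
Qed.

Lemma is_vertexP (u : BU n) :
  is_vertex k u <-> [/\ bu_valid k u, u.1 != set0 & u.1 != setT].
Proof.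
split=> [[vu [u0 [v [vv [v0 /(bu_meet_eq0 vu vv) uv0]]]]] | [vu u0 uT]].
  split=> //; apply/eqP => E; first exact/u0/bu_valid_set0.
  by apply/v0/bu_valid_set0; rewrite // -uv0 E setTI.
split=> //; split; first by move=> E; rewrite E eqxx in u0.
exists (~: u.1, 0); split; first exact: bu_valid0.
split; first by case=> /eqP; rewrite -setCT (inj_eq (@setC_inj _)) (negbTE uT).
by apply/bu_meet_eq0; [|exact: bu_valid0|exact: setICr].
Qed.

Lemma is_vertex_setC (a : {set 'I_n}) :
  a != set0 -> a != setT -> is_vertex k (~: a, 0).
Proof.
move=> a0 aT; apply/is_vertexP; split; first exact: bu_valid0.
  by rewrite -setCT (inj_eq (@setC_inj _)).
by rewrite -setC0 (inj_eq (@setC_inj _)).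
Qed.

Lemma adjP (u v : BU n) :
  adj k u v <-> [/\ is_vertex k u, is_vertex k v & u.1 :&: v.1 = set0].
Proof.
have vertex_valid (w : BU n) : is_vertex k w -> bu_valid k w by case.
split=> [[xu [xv [_ uv0]]] | [xu xv uv0]].
  by split=> //; apply/(bu_meet_eq0 (vertex_valid _ xu) (vertex_valid _ xv)).
do 2!split=> //; split.
  move=> euv; case/is_vertexP: xu => _ /eqP + _; apply.
  by rewrite -uv0 euv setIid.
exact/(bu_meet_eq0 (vertex_valid _ xu) (vertex_valid _ xv)).
Qed.

Lemma adj_sym (u v : BU n) : adj k u v -> adj k v u.
Proof. by case/adjP => xu xv uv0; apply/adjP; rewrite setIC. Qed.

Lemma adj_not_max_distant (u v : BU n) (c : {set 'I_n}) :
  adj k u v -> c :&: u.1 = set0 -> c :&: v.1 != set0 -> (c, 0) != v ->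
  ~ max_distant k u v.
Proof.
move=> uv cu0 cv0 ncv md.
have /adjP [xu _ _] := uv; have /is_vertexP [_ u0 _] := xu.
have uc : adj k u (c, 0).
  apply/adjP; split=> //; last by rewrite setIC.
  apply/is_vertexP; split; first exact: bu_valid0.
    by apply: contraNneq cv0 => /= ->; rewrite set0I.
  by apply: contraNneq u0 => /= cT; rewrite -cu0 cT setTI.
have d1 : within k 1 u v by right; exists v.
case: (md _ uc 1 d1) => [/eqP|[w [/adjP [_ _ cw0] wv]]]; first exact/negP.
by rewrite -wv cw0 eqxx in cv0.
Qed.

Lemma adj_not_max_distant_card (u v : BU n) :
  adj k u v -> 1 < #|v.1| -> ~ max_distant k u v.
Proof.
move=> uv v2; have /adjP [_ _ uv0] := uv.
have [e ev] : exists e, e \in v.1 by apply/card_gt0P; lia.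
apply: (adj_not_max_distant (c := [set e])) => //.
- have : e \notin u.1 :&: v.1 by rewrite uv0 inE.
  by rewrite inE ev andbT => eu; apply/eqP; rewrite setI_eq0 disjoints1.
- by apply/set0Pn; exists e; rewrite !inE eqxx.
- by apply: contraTneq v2 => <-; rewrite cards1.
Qed.

Lemma adj_not_max_distant_setC (u v : BU n) :
  adj k u v -> v.1 != ~: u.1 -> ~ max_distant k u v.
Proof.
move=> uv nvu; have /adjP [_ /is_vertexP [_ v0 _] uv0] := uv.
apply: (adj_not_max_distant (c := ~: u.1)) => //.
- by rewrite setIC setICr.
- move/eqP: uv0; rewrite setI_eq0 disjoint_sym disjoints_subset => /setIidPr.
  by rewrite setIC => ->.
- by apply: contraNneq nvu => <-.
Qed.

Lemma proper_not_max_distant (u v : BU n) :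
  is_vertex k u -> is_vertex k v -> u.1 \proper v.1 -> ~ max_distant k u v.
Proof.
move=> xu xv uv md.
have /is_vertexP [_ u0 uT] := xu; have /is_vertexP [_ v0 vT] := xv.
have suv := proper_sub uv.
have uw : adj k u (~: u.1, 0).
  by apply/adjP; split=> //; [exact: is_vertex_setC | exact: setICr].
have uz : adj k u (~: v.1, 0).
  apply/adjP; split=> //; first exact: is_vertex_setC.
  by apply/eqP; rewrite -setDE setD_eq0.
have zv : adj k (~: v.1, 0) v.
  by apply/adj_sym/adjP; split=> //; [exact: is_vertex_setC | exact: setICr].
have d2 : within k 2 u v by right; exists (~: v.1, 0); split=> //; right; exists v.
have sub_of_setC0 (c : {set 'I_n}) : ~: u.1 :&: c = set0 -> c \subset u.1.
  by move/eqP; rewrite setI_eq0 disjoint_sym disjoints_subset setCK.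
case: (md _ uw 2 d2) => [wv|[z [/adjP [_ xz wz0] [zv'|[c [/adjP [_ _ zc0] cv]]]]]].
- by move: u0; rewrite -(setIidPl suv) -wv /= setICr eqxx.
- by move: uv; rewrite properE -zv' (sub_of_setC0 _ wz0) andbF.
- case/is_vertexP: xz => _ /eqP []; rewrite -zc0 cv; apply/esym/setIidPl.
  exact: subset_trans (sub_of_setC0 _ wz0) suv.
Qed.

End BlowUp.

Theorem mainTheorem5 (n : nat) (k : {set 'I_n} -> nat) (hn : 3 <= n)
    (hk : forall a : {set 'I_n}, a != set0 -> a != [set: 'I_n] -> 0 < k a)
    (x y : BU n) :
  is_vertex k x -> is_vertex k y -> ~ perp_equiv k x y ->
  (bu_le x y \/ bu_le y x \/ bu_meet k x y = bu_zero n) ->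
  ~ mutually_max_distant k x y.
Proof.
move=> xx xy nxy cmp [mxy myx].
have /(is_vertexP hk) [vx _ _] := xx; have /(is_vertexP hk) [vy _ _] := xy.
have nab : x.1 != y.1 by apply/eqP => exy; apply/nxy/perp_equiv_fst.
case: cmp => [|[|/(bu_meet_eq0 hk vx vy) xy0]].
- rewrite /bu_le (negbTE nab) => /= xy_lt.
  exact: (proper_not_max_distant hk xx xy xy_lt).
- rewrite /bu_le eq_sym (negbTE nab) => /= yx_lt.
  exact: (proper_not_max_distant hk xy xx yx_lt).
have adj_xy : adj k x y by apply/(adjP hk).
have [ey|nyx] := eqVneq y.1 (~: x.1); last first.
  exact: (adj_not_max_distant_setC hk adj_xy nyx mxy).
have : #|x.1| + #|y.1| = n by rewrite ey cardsC card_ord.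
have [y2 _|y1 xy_card] := leqP 2 #|y.1|.
  exact: (adj_not_max_distant_card hk adj_xy y2 mxy).
by apply: (adj_not_max_distant_card hk (adj_sym hk adj_xy)) myx; lia.
Qed.
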